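(* Let $\mathbb{F}$, $\mathfrak g$, $\mathcal C$, $\mathcal C^{du}$, $M$, $Lie(M)$ be as in the context, and let $M^\times$ act on $Lie(M)$ by conjugation $x\mapsto mxm^{-1}$ (product in $Nat$). If the pair $\mathcal C,\mathcal C^{du}$ is good for integrating $\mathfrak g$, then the kernel of this action is $C(M)\cap M^\times$, where $C(M)$ is the center of $M$. If the pair is very good for integrating $\mathfrak g$, then this kernel equals the center $C(M^\times)$ of $M^\times$.
   Context: Let $\mathbb F$ be a field of characteristic $0$, $\mathfrak g$ a Lie algebra over $\mathbb F$. $\mathcal C$: full subcategory of $\mathfrak g$-modules closed under isomorphism and submodules, containing a direct sum and tensor product of any two objects and a one-dimensional trivial module, with only $0\in\mathfrak g$ acting trivially on all objects. $x_V$ = action. Category of duals: point-separating $V^{du}\subseteq V^*$ with $\phi\circ x_V\in V^{du}$ ($x\in\mathfrak g$), $\psi\circ\alpha\in V^{du}$ for morphisms $\alpha:V\to W$, $\psi\in W^{du}$, $(V\oplus W)^{du}=V^{du}\oplus W^{du}$, $V^{du}\otimes W^{du}\subseteq(V\otimes W)^{du}$. $End_{V^{du}}(V)=\{\varphi:\phi\circ\varphi\in V^{du}\ \forall\phi\}$. $Nat$: the associative algebra of families $(m_V)_V$, $m_V\in End_{V^{du}}(V)$, commuting with all morphisms. $M=\{m\in Nat:m_{V\otimes W}=m_V\otimes m_W,\ m_{V_0}=id$ for trivial one-dimensional $V_0\}$, $M^\times$ its units. $\mathbb F[M]=\{f_{\phi v}\}$, $f_{\phi v}(m)=\phi(m_Vv)$.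 $Lie(M)=\{x\in Nat:x_{V\otimes W}=x_V\otimes id+id\otimes x_W,\ x_{V_0}=0,\ \exists\,\delta_x:\mathbb F[M]\to\mathbb F$ with $\delta_x(f_{\phi v})=\phi(x_Vv)\}$; it is stable under conjugation by $M^\times$. For a submonoid $N$ with vanishing ideal $I(N)\subseteq\mathbb F[M]$, $Lie(N)=\{x\in Lie(M):\delta_x(I(N))=0\}$. Identify $\mathfrak g$ with $\{(x_V)_V\}\subseteq Nat$. Good: $\mathfrak g\subseteq Lie(M)$; very good: $\mathfrak g\subseteq Lie(M^\times)$. *)

From HB Require Import structures.
From mathcomp Require Import all_boot all_order all_algebra.
Set Implicit Arguments.
Unset Strict Implicit.
Unset Printing Implicit Defensive.
Import GRing.Theory.
Local Open Scope ring_scope.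

Section Defs.
Variable F : fieldType.

Definition lin (U V : lmodType F) (f : U -> V) : Prop :=
  forall (a : F) (u v : U), f (a *: u + v) = a *: f u + f v.

Definition bilin (U V W : lmodType F) (f : U -> V -> W) : Prop :=
  (forall v, lin (fun u => f u v)) /\ (forall u, lin (f u)).

Record LieAlg := LieAlgMk {
  lcar : lmodType F;
  lbr : lcar -> lcar -> lcar;
  lbr_bilin : bilin lbr;
  lbr_alt : forall x, lbr x x = 0;
  lbr_jacobi : forall x y z,
    lbr x (lbr y z) + lbr y (lbr z x) + lbr z (lbr x y) = 0 }.

Variable g : LieAlg.

Record gmod := GMod {
  gcar : lmodType F;
  gact : lcar g -> gcar -> gcar;
  gact_bilin : bilin gact;
  gact_br : forall x y v,
    gact (lbr x y) v = gact x (gact y v) - gact y (gact x v) }.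

Definition ghom (V W : gmod) (a : gcar V -> gcar W) : Prop :=
  lin a /\ forall x v, a (gact x v) = gact x (a v).

Section Sum.
Variables V W : gmod.
Definition sum_act (x : lcar g) (p : (gcar V * gcar W)%type) : (gcar V * gcar W)%type :=
  (gact x p.1, gact x p.2).
Lemma sum_act_bilin : bilin sum_act.
Proof.
have [lV rV] := gact_bilin V; have [lW rW] := gact_bilin W.
rewrite /bilin /lin.
split=> [[v w] a u1 v1|x a [u1 u2] [v1 v2]]; rewrite /sum_act /=.
- by rewrite (lV v) (lW w).
- by rewrite (rV x) (rW x).
Qed.
Lemma sum_act_br x y p :
  sum_act (lbr x y) p = sum_act x (sum_act y p) - sum_act y (sum_act x p).
Proof. by case: p => v w; rewrite /sum_act /= !gact_br. Qed.
Definition sumMod : gmod := GMod sum_act_bilin sum_act_br.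
End Sum.

Definition is_triv1 (V : gmod) : Prop :=
  (forall x v, gact x v = 0 :> gcar V) /\
  exists v0 : gcar V, v0 <> 0 /\ forall v, exists c : F, v = c *: v0.

Definition is_tensor (V W T : gmod) (b : gcar V -> gcar W -> gcar T) : Prop :=
  [/\ bilin b,
      (forall (U : lmodType F) (f : gcar V -> gcar W -> U), bilin f ->
          exists h : gcar T -> U, lin h /\ (forall v w, h (b v w) = f v w) /\
            forall h' : gcar T -> U, lin h' -> (forall v w, h' (b v w) = f v w) ->
              forall t, h' t = h t)
    & forall x v w, gact x (b v w) = b (gact x v) w + b v (gact x w)].

Record Cat := CatMk {
  inC : gmod -> Prop;
  inC_iso : forall V W : gmod, inC V ->
     (exists a : gcar V -> gcar W, ghom a /\ bijective a) -> inC W;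
  inC_sub : forall V W : gmod, inC V ->
     (exists a : gcar W -> gcar V, ghom a /\ injective a) -> inC W;
  inC_sum : forall V W, inC V -> inC W -> inC (sumMod V W);
  inC_tensor : forall V W, inC V -> inC W ->
     exists T b, inC T /\ @is_tensor V W T b;
  inC_triv : exists V, inC V /\ is_triv1 V;
  inC_faithful : forall x : lcar g,
     (forall V, inC V -> forall v : gcar V, gact x v = 0) -> x = 0 }.

Variable C : Cat.

Definition objC := {V : gmod | inC C V}.
Definition ocar (V : objC) : lmodType F := gcar (sval V).
Definition osum (V W : objC) : objC :=
  exist _ (sumMod (sval V) (sval W)) (inC_sum (svalP V) (svalP W)).

Unset Implicit Arguments.
Record Duals := DualsMk {
  du : forall V : objC, (ocar V -> F) -> Prop;
  du_lin : forall V phi, du V phi -> lin (phi : ocar V -> F^o);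
  du_0 : forall V, du V (fun _ => 0);
  du_add : forall V phi psi, du V phi -> du V psi -> du V (fun v => phi v + psi v);
  du_scale : forall V (a : F) phi, du V phi -> du V (fun v => a * phi v);
  du_sep : forall V (v : ocar V), v <> 0 -> exists phi, du V phi /\ phi v <> 0;
  du_act : forall V phi (x : lcar g), du V phi -> du V (fun v => phi (gact x v));
  du_mor : forall (V W : objC) (a : ocar V -> ocar W) psi,
     ghom a -> du W psi -> du V (fun v => psi (a v));
  du_sum : forall (V W : objC) (chi : ocar (osum V W) -> F),
     du (osum V W) chi <->
     exists phi psi, [/\ du V phi, du W psi & forall v w, chi (v, w) = phi v + psi w];
  du_tensor : forall (V W T : objC) (b : ocar V -> ocar W -> ocar T),
     is_tensor b -> forall phi psi chi, du V phi -> du W psi -> lin (chi : ocar T -> F^o) ->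
     (forall v w, chi (b v w) = phi v * psi w) -> du T chi }.

Set Implicit Arguments.
Variable D : Duals.
Definition du_ := du D.
Arguments du_ : clear implicits.

Definition NatT := forall V : objC, ocar V -> ocar V.

Definition nmul (m n : NatT) : NatT := fun V v => m V (n V v).
Definition nid : NatT := fun V v => v.
Definition neq (m n : NatT) : Prop := forall V v, m V v = n V v.

Definition isNat (m : NatT) : Prop :=
  [/\ forall V, lin (m V),
      forall V phi, du_ V phi -> du_ V (fun v => phi (m V v))
    & forall (V W : objC) (a : ocar V -> ocar W), ghom a ->
        forall v, a (m V v) = m W (a v)].

Definition isM (m : NatT) : Prop :=
  [/\ isNat m,
      forall (V W T : objC) (b : ocar V -> ocar W -> ocar T), is_tensor b ->
        forall v w, m T (b v w) = b (m V v) (m W w)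
    & forall V : objC, is_triv1 (sval V) -> forall v, m V v = v].

Definition Msub := {m : NatT | isM m}.

Definition unitM (m : NatT) : Prop :=
  isM m /\ exists n, [/\ isM n, neq (nmul m n) nid & neq (nmul n m) nid].

Definition LieM (x : NatT) : Prop :=
  [/\ isNat x,
      forall (V W T : objC) (b : ocar V -> ocar W -> ocar T), is_tensor b ->
        forall v w, x T (b v w) = b (x V v) w + b v (x W w),
      forall V : objC, is_triv1 (sval V) -> forall v, x V v = 0
    & exists delta : (Msub -> F) -> F,
        forall V phi v, du_ V phi ->
          delta (fun m => phi (sval m V v)) = phi (x V v)].

(* Lie(M^x): x in Lie(M) with delta_x vanishing on the ideal I(M^x) *)
Definition LieMx (x : NatT) : Prop :=
  LieM x /\
  forall V phi v, du_ V phi ->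
    (forall m, unitM m -> phi (m V v) = 0) -> phi (x V v) = 0.

Definition gfam (x : lcar g) : NatT := fun V v => gact x v.

Definition good : Prop := forall x, LieM (gfam x).
Definition verygood : Prop := forall x, LieMx (gfam x).

Definition conj_kernel (m : NatT) : Prop :=
  unitM m /\
  forall n, isM n -> neq (nmul m n) nid -> neq (nmul n m) nid ->
    forall x, LieM x -> neq (nmul (nmul m x) n) x.

Definition centerM (m : NatT) : Prop :=
  isM m /\ forall n, isM n -> neq (nmul m n) (nmul n m).

Definition centerMx (m : NatT) : Prop :=
  unitM m /\ forall n, unitM n -> neq (nmul m n) (nmul n m).

End Defs.
Arguments Duals [F g] C.

(** If [m] is central in [M] and [x] lies in [Lie(M)], then [phi (m_V (x_V v))] and
    [phi (x_V (m_V v))] are the values of [delta_x] at [f_{phi o m_V, v}] and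
    [f_{phi, m_V v}], which are the same function on [M] because [m] is central; as
    the duals separate points, [m] commutes with [x], so central units act trivially.
    Conversely, if [m] acts trivially on [Lie(M)], goodness puts [g] in [Lie(M)], so
    each [m_V] commutes with the action of [g], i.e. is a morphism of [g]-modules, and
    naturality of the elements of [Nat] makes [m] central in [M].
    In the very good case let [m] be central in [M^x]. For [phi] in [V^du], the dual
    [chi (v, w) = phi (m_V v) - phi w] of [V (+) V] gives the function
    [k |-> chi (k (v, m_V v))] on [M], which vanishes on [M^x], i.e. lies in [I(M^x)].
    Since [delta_x] kills [I(M^x)] for [x] in [g], [chi (x (v, m_V v)) = 0], that is
    [m_V (x v) = x (m_V v)]; so again [m_V] is a morphism and [m] is central in [M]. *)
From mathcomp Require Import all_boot all_order all_algebra.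
From Stdlib Require Import FunctionalExtensionality.
Set Implicit Arguments.
Unset Strict Implicit.
Unset Printing Implicit Defensive.
Import GRing.Theory.
Local Open Scope ring_scope.

Section Linear.
Variable F : fieldType.
Variables U V : lmodType F.
Variable f : U -> V.
Hypothesis f_lin : lin f.

Lemma lin0 : f 0 = 0.
Proof.
have := f_lin 1 0 0; rewrite !scale1r addr0 => h.
by apply: (@addrI _ (f 0)); rewrite addr0 -h.
Qed.

Lemma linN u : f (- u) = - f u.
Proof. by have := f_lin (-1) u 0; rewrite addr0 lin0 addr0 !scaleN1r. Qed.

Lemma linB u v : f (u - v) = f u - f v.
Proof. by have := f_lin 1 u (- v); rewrite !scale1r linN. Qed.

End Linear.

Section Integration.
Variable F : fieldType.
Variable g : LieAlg F.
Variable C : Cat g.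
Variable D : Duals C.

Lemma duals_separate (V : objC C) (a b : ocar V) :
  (forall phi, du_ D phi -> phi a = phi b) -> a = b.
Proof.
move=> hab; apply/eqP; apply/negPn/negP => /eqP a_neq_b.
have ab_neq0 : a - b <> 0 by move/eqP; rewrite subr_eq0 => /eqP.
have [phi [dphi]] := du_sep _ _ _ D _ _ ab_neq0.
by rewrite (linB (du_lin _ _ _ D _ _ dphi)) (hab _ dphi) subrr.
Qed.

Lemma ghom_inl (V W : objC C) :
  ghom (fun v : ocar V => (v, 0) : ocar (osum V W)).
Proof.
split=> [c u v | y v].
- by rewrite -[RHS]/(c *: u + v, c *: (0 : ocar W) + 0) scaler0 addr0.
- by rewrite /= /sum_act /= (lin0 ((gact_bilin (sval W)).2 y)).
Qed.

Lemma ghom_inr (V W : objC C) :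
  ghom (fun w : ocar W => (0, w) : ocar (osum V W)).
Proof.
split=> [c u v | y v].
- by rewrite -[RHS]/(c *: (0 : ocar V) + 0, c *: u + v) scaler0 addr0.
- by rewrite /= /sum_act /= (lin0 ((gact_bilin (sval V)).2 y)).
Qed.

Lemma isNat_osum (k : NatT C) (V W : objC C) (a : ocar V) (b : ocar W) :
  isNat D k -> k (osum V W) (a, b) = (k V a, k W b).
Proof.
move=> [k_lin _ k_nat].
have -> : (a, b) = 1 *: ((a, 0) : ocar (osum V W)) + (0, b).
  by rewrite scale1r -[RHS]/(a + 0, 0 + b) addr0 add0r.
rewrite k_lin scale1r -(k_nat _ _ _ (ghom_inl V W)) -(k_nat _ _ _ (ghom_inr V W)).
by rewrite -[LHS]/(k V a + 0, 0 + k W b) addr0 add0r.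
Qed.

Lemma ghom_isNat_comm (m n : NatT C) : (forall V, ghom (m V)) -> isNat D n ->
  forall V v, m V (n V v) = n V (m V v).
Proof. by move=> m_hom [_ _ n_nat] V v; apply: n_nat. Qed.

Lemma ghom_centerM (m : NatT C) :
  isM D m -> (forall V, ghom (m V)) -> centerM D m.
Proof.
by move=> mM m_hom; split=> // n [nN _ _] V v; exact: ghom_isNat_comm m_hom nN V v.
Qed.

Lemma centerM_LieM_comm (m x : NatT C) : centerM D m -> LieM D x ->
  forall V v, m V (x V v) = x V (m V v).
Proof.
move=> [[[_ m_du _] _ _] m_central] [_ _ _ [delta delta_x]] V v.
apply: duals_separate => phi dphi.
rewrite -(delta_x _ _ _ (m_du _ _ dphi)) -(delta_x _ _ _ dphi).
congr delta; apply: functional_extensionality => k.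
by have := m_central _ (svalP k) V v; rewrite /nmul => ->.
Qed.

Lemma centerM_unit_conj_kernel (m : NatT C) :
  centerM D m -> unitM D m -> conj_kernel D m.
Proof.
move=> m_central m_unit; split=> // n _ mn_id _ x x_Lie V v.
rewrite /nmul (centerM_LieM_comm m_central x_Lie).
by have := mn_id V v; rewrite /nmul /nid => ->.
Qed.

Lemma conj_kernel_ghom (m : NatT C) :
  good D -> conj_kernel D m -> forall V, ghom (m V).
Proof.
move=> gD [[[[m_lin _ _] _ _] [n [nM mn_id nm_id]]] m_ker] V.
split=> [|y w]; first exact: m_lin.
have := m_ker n nM mn_id nm_id (gfam y) (gD y) V (m V w).
by rewrite /nmul /gfam; have := nm_id V w; rewrite /nmul /nid => ->.
Qed.

Lemma centerMx_ghom (m : NatT C) :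
  verygood D -> centerMx D m -> forall V, ghom (m V).
Proof.
move=> vgD [[[[m_lin m_du _] _ _] _] m_central] V.
split=> [|y v]; first exact: m_lin.
apply: duals_separate => phi dphi.
pose chi (p : ocar (osum V V)) := phi (m V p.1) - phi p.2.
have dchi : du_ D chi.
  apply/(du_sum _ _ _ D V V chi).
  exists (fun w => phi (m V w)), (fun w => -1 * phi w).
  by split=> [||w1 w2]; [exact: m_du | exact: du_scale | rewrite mulN1r].
have chi_units k : unitM D k -> chi (k (osum V V) (v, m V v)) = 0.
  move=> k_unit; have [[kN _ _] _] := k_unit.
  rewrite (isNat_osum _ _ kN) /chi /=.
  by have := m_central k k_unit V v; rewrite /nmul => ->; rewrite subrr.
have := (vgD y).2 (osum V V) chi (v, m V v) dchi chi_units.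
by rewrite /chi /gfam /= /sum_act /= => /eqP; rewrite subr_eq0 => /eqP.
Qed.

Lemma good_conj_kernelP (m : NatT C) :
  good D -> conj_kernel D m <-> centerM D m /\ unitM D m.
Proof.
move=> gD; split=> [m_ker | [m_central m_unit]].
- split; last exact: m_ker.1.
  exact: ghom_centerM m_ker.1.1 (conj_kernel_ghom gD m_ker).
- exact: centerM_unit_conj_kernel.
Qed.

End Integration.

Theorem theorem2p11 (F : fieldType) (Hchar : ([pchar F] =i pred0)%R)
  (g : LieAlg F) (C : Cat g) (D : Duals C) :
  (good D -> forall m, conj_kernel D m <-> (centerM D m /\ unitM D m)) /\
  (verygood D -> forall m, conj_kernel D m <-> centerMx D m).
Proof.
split=> [gD m | vgD m]; first exact: good_conj_kernelP.
have gD : good D := fun x => (vgD x).1.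
apply: iff_trans; first exact: good_conj_kernelP.
split=> [[m_central m_unit] | m_centralx].
- by split=> // n [nM _]; apply: m_central.2.
- split; last exact: m_centralx.1.
  exact: ghom_centerM m_centralx.1.1 (centerMx_ghom vgD m_centralx).
Qed.
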